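(* The class of locally convex spaces having a fundamental bounded resolution is closed under taking (i) (linear) subspaces, (ii) countable locally convex direct sums, and (iii) countable products.
   Context: Order $\mathbb{N}^{\mathbb{N}}$ pointwise. A resolution in a set $\Omega$ is a family $\{A_\alpha:\alpha\in\mathbb{N}^{\mathbb{N}}\}$ of subsets covering $\Omega$ with $A_\alpha\subseteq A_\beta$ whenever $\alpha\le\beta$. A locally convex space $E$ has a fundamental bounded resolution if it has a resolution consisting of bounded subsets of $E$ such that every bounded subset of $E$ is contained in some member of the resolution. *)

From HB Require Import structures.
From mathcomp Require Import all_boot all_order all_algebra.
From mathcomp Require Import all_classical all_reals all_analysis.
Set Implicit Arguments. Unset Strict Implicit. Unset Printing Implicit Defensive.
Import Order.TTheory GRing.Theory Num.Theory.
Local Open Scope classical_set_scope.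
Local Open Scope ring_scope.

(** Generic notions, relative to a scalar action [scale] and a filter base
    [N] of neighbourhoods of the origin, on a carrier set [S] (the space). *)

Definition vbounded (R : realType) (V : Type) (scale : R -> V -> V)
    (N : set_system V) (B : set V) : Prop :=
  forall U, N U -> exists r : R, 0 < r /\
    forall t : R, r < `|t| -> B `<=` scale t @` U.

Definition le_seq (a b : nat -> nat) : Prop := forall n, (a n <= b n)%N.

Definition fbr_on (R : realType) (V : Type) (scale : R -> V -> V)
    (N : set_system V) (S : set V) : Prop :=
  exists A : (nat -> nat) -> set V,
    (forall a b, le_seq a b -> A a `<=` A b) /\
    (forall a, A a `<=` S) /\
    (S `<=` \bigcup_a A a) /\
    (forall a, vbounded scale N (A a)) /\
    (forall B, B `<=` S -> vbounded scale N B -> exists a, B `<=` A a).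

(** A locally convex space (mathcomp-analysis [tvsType], which is locally
    convex by definition) has a fundamental bounded resolution. *)
Definition has_fbr (R : realType) (E : tvsType R) : Prop :=
  fbr_on (fun (t : R) (x : E) => t *: x) (nbhs (0 : E)) setT.

Definition linear_subspace (R : realType) (E : lmodType R) (F : set E) : Prop :=
  F 0 /\ (forall x y, F x -> F y -> F (x + y)) /\
  (forall (t : R) x, F x -> F (t *: x)).

Definition subspace_nbhs0 (R : realType) (E : tvsType R) (F : set E)
  : set_system E :=
  fun U => exists V, nbhs (0 : E) V /\ V `&` F `<=` U.

Definition pscale (R : realType) (E : nat -> tvsType R)
    (t : R) (x : forall n, E n) : forall n, E n :=
  fun n => t *: x n.

Definition prod_nbhs0 (R : realType) (E : nat -> tvsType R)
  : set_system (forall n, E n) :=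
  fun U => exists (k : nat) (W : forall n, set (E n)),
    (forall n, nbhs (0 : E n) (W n)) /\
    [set x | forall n, (n < k)%N -> W n (x n)] `<=` U.

(** carrier of the direct sum: finitely supported sequences *)
Definition finsupp (R : realType) (E : nat -> tvsType R)
  : set (forall n, E n) :=
  fun x => exists k, forall n, (k <= n)%N -> x n = 0.

Definition absconvex (R : realType) (E : lmodType R) (U : set E) : Prop :=
  forall x y (a b : R), U x -> U y -> `|a| + `|b| <= 1 -> U (a *: x + b *: y).

(** absolutely convex hull of the union of the canonical images of the
    absolutely convex sets W n in the direct sum *)
Definition dsum_hull (R : realType) (E : nat -> tvsType R)
    (W : forall n, set (E n)) : set (forall n, E n) :=
  fun x => exists (k : nat) (l : nat -> R),
    (forall n, (k <= n)%N -> x n = 0 /\ l n = 0) /\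
    \sum_(n < k) `|l n| <= 1 /\
    (forall n, exists u, W n u /\ x n = l n *: u).

Definition dsum_nbhs0 (R : realType) (E : nat -> tvsType R)
  : set_system (forall n, E n) :=
  fun U => exists W : forall n, set (E n),
    (forall n, nbhs (0 : E n) (W n) /\ absconvex (W n)) /\
    dsum_hull W `<=` U.

From HB Require Import structures.
From mathcomp Require Import all_boot all_order all_algebra.
From mathcomp Require Import all_classical all_reals all_analysis.
From mathcomp Require Import ring lra.
Import Order.TTheory GRing.Theory Num.Theory.
Local Open Scope classical_set_scope.
Local Open Scope ring_scope.

Set Implicit Arguments.
Unset Strict Implicit.
Unset Printing Implicit Defensive.

(* Resolutions (A_n) of countably many spaces are merged into a single one,
   indexed by a : nat -> nat, by reading a as the countable family of indices
   (slice a n)_n.  In the product, a set is bounded iff all its projections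
   are.  In the locally convex direct sum, a bounded set has in addition all
   but finitely many coordinates in the closure of 0: otherwise, at infinitely
   many n, an absolutely convex 0-neighbourhood V_n misses some x_n, and the
   neighbourhood generated by the V_n / (n + 1) does not absorb the set.  The
   entry a 0 bounds this finite part; conversely such sets are bounded since
   x / t is the convex combination of the 2^(n+1) x_n / t with weights
   2^-(n+1).  A subspace F inherits the traces on F of a resolution, as a
   subset of F is bounded in F iff it is bounded in the whole space. *)

Section resolution_spec.
Variables (R : realType) (V : Type) (scale : R -> V -> V).

Lemma vbounded_sub (N : set_system V) (B B' : set V) :
  B' `<=` B -> vbounded scale N B -> vbounded scale N B'.
Proof.
move=> B'B bB U NU; have [r [r0 rB]] := bB U NU.
by exists r; split=> // t rt b /B'B; exact: rB.
Qed.

Hypotheses (scaleK : forall t, t != 0 -> cancel (scale t) (scale t^-1))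
           (scaleKV : forall t, t != 0 -> cancel (scale t^-1) (scale t)).

Lemma vbounded_nearP (N : set_system V) (B : set V) :
  vbounded scale N B <->
  forall U, N U -> \forall r \near +oo, forall t : R, r < `|t| ->
    forall b, B b -> U (scale t^-1 b).
Proof.
split=> bB U NU.
  have [r [r0 rB]] := bB U NU.
  near=> s => t st b Bb.
  have rt : r < `|t|.
    by apply: lt_trans st; near: s; exact: (nbhs_pinfty_gt (num_real _)).
  have t0 : t != 0 by rewrite -normr_gt0 (lt_trans r0 rt).
  by have [u Uu <-] := rB t rt b Bb; rewrite scaleK.
near (+oo : set_system R) => r.
have r0 : 0 < r by near: r; exact: (nbhs_pinfty_gt (num_real _)).
exists r; split=> // t rt b Bb.
exists (scale t^-1 b); last by rewrite scaleKV // -normr_gt0 (lt_trans r0 rt).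
by move: t rt b Bb; near: r; exact: bB.
Unshelve. all: by end_near.
Qed.

Variables (N : set_system V) (S : set V).

Record fbr_spec (A : (nat -> nat) -> set V) : Prop := FbrSpec {
  fbr_mono : forall a b, le_seq a b -> A a `<=` A b;
  fbr_sub : forall a, A a `<=` S;
  fbr_cover : S `<=` \bigcup_a A a;
  fbr_bounded : forall a, vbounded scale N (A a);
  fbr_fundamental : forall B, B `<=` S -> vbounded scale N B ->
    exists a, B `<=` A a }.

Lemma fbr_onP : fbr_on scale N S <-> exists A, fbr_spec A.
Proof. by split=> [[A [? [? [? [? ?]]]]]|[A []]]; exists A. Qed.

Lemma fbr_cover1 A x : fbr_spec A -> S x -> exists a, [set x] `<=` A a.
Proof. by move=> /fbr_cover xA /xA[a _ Ax]; exists a => _ ->. Qed.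

End resolution_spec.

Lemma fbr_spec_trace (R : realType) (V : Type) (scale : R -> V -> V)
    (N N' : set_system V) (S F : set V) A :
  F `<=` S ->
  (forall B, B `<=` F -> vbounded scale N' B <-> vbounded scale N B) ->
  fbr_spec scale N S A -> fbr_spec scale N' F (fun a => A a `&` F).
Proof.
move=> FS bddE [Amono _ Acov Abdd Afund]; split.
- by move=> a b ab x [Ax Fx]; split=> //; exact: Amono ab x Ax.
- by move=> a x [].
- by move=> x Fx; have [a _ Ax] := Acov x (FS x Fx); exists a.
- move=> a; apply/(bddE _ (@subIsetr _ _ _)).
  exact: vbounded_sub (Abdd a).
- move=> B BF /(bddE _ BF) bB; have [a BA] := Afund B (subset_trans BF FS) bB.
  by exists a => x Bx; split; [exact: BA | exact: BF].
Qed.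

Notation tvs_fbr A := (fbr_spec *:%R (nbhs 0) setT A).

Section tvs.
Variables (R : realType) (E : tvsType R).
Implicit Types (B U W : set E) (x y : E).

Lemma vboundedZ_nearP (N : set_system E) B :
  vbounded *:%R N B <->
  forall U, N U -> \forall r \near +oo, forall t : R, r < `|t| ->
    forall b, B b -> U (t^-1 *: b).
Proof. exact: (vbounded_nearP (@scalerK R E) (@scalerKV R E)). Qed.

Lemma subspace_vboundedE (F : set E) B : linear_subspace F -> B `<=` F ->
  vbounded *:%R (subspace_nbhs0 F) B <-> vbounded *:%R (nbhs 0) B.
Proof.
move=> [_ [_ FZ]] BF; rewrite !vboundedZ_nearP.
split=> bB U.
  move=> U0; have UF0 : subspace_nbhs0 F (U `&` F) by exists U; split.
  by apply: filterS (bB _ UF0) => r rB t rt b /(rB t rt)[].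
move=> [W [W0 WU]]; apply: filterS (bB W W0) => r rB t rt b Bb.
by apply: WU; split; [exact: rB | exact/FZ/BF].
Qed.

Lemma subspace_fbr (F : set E) : linear_subspace F -> has_fbr E ->
  fbr_on *:%R (subspace_nbhs0 F) F.
Proof.
move=> sF /fbr_onP[A HA]; apply/fbr_onP; exists (fun a => A a `&` F).
by apply: fbr_spec_trace HA => // B; exact: subspace_vboundedE.
Qed.

Lemma nbhs0_scale W (c : R) : nbhs 0 W -> nbhs 0 [set y | W (c *: y)].
Proof.
move=> W0; have [->|c0] := eqVneq c 0.
  by apply: filterS filterT => y _ /=; rewrite scale0r; exact: nbhs_singleton.
apply: filterS (nbhs0Z (invr_neq0 c0) W0) => _ [y Wy <-] /=.
by rewrite scalerKV.
Qed.

(* Points which no 0-neighbourhood separates from 0, i.e. the closure of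
   {0}; tvsType does not assume the Hausdorff property. *)
Definition indist0 : set E := [set y | forall W, nbhs 0 W -> W y].

Lemma indist0_0 : indist0 0.
Proof. by move=> W; exact: nbhs_singleton. Qed.

Lemma indist0Z y W (c : R) : indist0 y -> nbhs 0 W -> W (c *: y).
Proof. by move=> y0 W0; exact: (y0 _ (nbhs0_scale c W0)). Qed.

Lemma absconvex_balanced W y (a : R) : absconvex W -> W y -> `|a| <= 1 ->
  W (a *: y).
Proof.
move=> aW Wy a1; have := aW y y a 0 Wy Wy.
by rewrite normr0 addr0 scale0r addr0; apply.
Qed.

Lemma absconvex_scale W (c : R) : absconvex W -> absconvex [set y | W (c *: y)].
Proof.
move=> aW x y a b Wx Wy ab /=.
by rewrite scalerDr !scalerA !(mulrC c) -!scalerA; exact: aW.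
Qed.

Lemma convex_sub_combination W x y (p q : R) :
  convex_set (W : set (convex_lmodType E)) -> W 0 -> W x -> W y ->
  0 <= p -> 0 <= q -> p + q <= 1 -> W (p *: x + q *: y).
Proof.
move=> cW W0 Wx Wy p0 q0 pq1.
have conv l u v : 0 <= l -> l <= 1 -> W u -> W v -> W (l *: u + (1 - l) *: v).
  move=> l0 l1 Wu Wv.
  by have := cW u v (Itv01 l0 l1) (mem_set Wu) (mem_set Wv); rewrite inE.
have [pq0|pq_neq0] := eqVneq (p + q) 0.
  have [-> ->] : p = 0 /\ q = 0 by split; lra.
  by rewrite !scale0r addr0.
have pq_gt0 : 0 < p + q by rewrite lt_def pq_neq0 /=; lra.
have Wxy : W ((p / (p + q)) *: x + (1 - p / (p + q)) *: y).
  apply: conv => //; first exact: divr_ge0 p0 (ltW pq_gt0).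
  by rewrite ler_pdivrMr // mul1r; lra.
have := conv _ _ _ (ltW pq_gt0) pq1 Wxy W0.
rewrite scaler0 addr0 scalerDr !scalerA.
have -> : (p + q) * (p / (p + q)) = p by field; lra.
by have -> : (p + q) * (1 - p / (p + q)) = q by field; lra.
Qed.

Lemma nbhs0_absconvex W : nbhs 0 W ->
  exists2 V, nbhs 0 V /\ absconvex V & V `<=` W.
Proof.
move=> W0.
have symm U : nbhs 0 U -> nbhs 0 [set y | U y /\ U (- y)].
  move=> U0; apply: filterI (U0) _.
  by apply: filterS (nbhs0N U0) => _ [y Uy <-] /=; rewrite opprK.
have [Bs Bconv [Bopen Bbase]] := @locally_convex R E.
have [b [Bb b0] bW] := Bbase 0 _ (symm W W0).
have b_nbhs : nbhs 0 b by apply: open_nbhs_nbhs; split=> //; exact: Bopen.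
exists [set y | b y /\ b (- y)]; last by move=> y [/bW[]].
split; first exact: symm.
have signed a y : b y -> b (- y) -> exists2 y', b y' & a *: y = `|a| *: y'.
  move=> b_y bNy; have [a0|a0] := leP 0 a.
    by exists y; rewrite ?ger0_norm.
  by exists (- y); rewrite // ltr0_norm // scaleNr scalerN opprK.
have comb x y a c : b x -> b (- x) -> b y -> b (- y) -> `|a| + `|c| <= 1 ->
    b (a *: x + c *: y).
  move=> bx bNx b_y bNy ac; have [x' bx' ->] := signed a x bx bNx.
  have [y' b_y' ->] := signed c y b_y bNy.
  exact: convex_sub_combination (Bconv b (mem_set Bb)) b0 bx' b_y' _ _ ac.
move=> x y a c [bx bNx] [b_y bNy] ac; split; first exact: comb.
by rewrite opprD -!scaleNr; apply: comb; rewrite ?normrN.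
Qed.

End tvs.

Definition slice (a : nat -> nat) (n : nat) : nat -> nat :=
  fun m => a (pickle (n, m)).

Lemma le_slice a b n : le_seq a b -> le_seq (slice a n) (slice b n).
Proof. by move=> ab m; exact: ab. Qed.

Lemma slice_dominate (beta : nat -> nat -> nat) (k : nat) :
  exists2 a, (k <= a 0)%N & forall n, le_seq (beta n) (slice a n).
Proof.
exists (fun j => maxn k (oapp (fun p => beta p.1 p.2) 0%N (unpickle j))).
  exact: leq_maxl.
by move=> n m; rewrite /slice pickleK /= leq_maxr.
Qed.

Lemma sum_inv_pow2_le1 (R : numFieldType) (k : nat) :
  \sum_(n < k) ((2 : R) ^+ n.+1)^-1 <= 1.
Proof.
suff -> : \sum_(n < k) ((2 : R) ^+ n.+1)^-1 = 1 - ((2 : R) ^+ k)^-1.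
  by rewrite lerBlDr lerDl invr_ge0 exprn_ge0.
elim: k => [|k IHk]; first by rewrite big_ord0 expr0 invr1 subrr.
rewrite big_ord_recr /= IHk exprS.
by field; rewrite expf_neq0.
Qed.

Section families.
Variables (R : realType) (E : nat -> tvsType R).
Implicit Types (x : forall n, E n) (B U : set (forall n, E n)).

Lemma has_fbr_seq : (forall n, has_fbr (E n)) ->
  exists A : forall n, (nat -> nat) -> set (E n), forall n, tvs_fbr (A n).
Proof.
move=> hE; have [A HA] := all_sig (fun n => cid ((fbr_onP _ _ _).1 (hE n))).
by exists A.
Qed.

Lemma pscaleK (t : R) : t != 0 -> cancel (@pscale R E t) (pscale t^-1).
Proof.
by move=> t0 x; apply: functional_extensionality_dep => n; exact: scalerK.
Qed.

Lemma pscaleKV (t : R) : t != 0 -> cancel (@pscale R E t^-1) (pscale t).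
Proof.
by move=> t0 x; apply: functional_extensionality_dep => n; exact: scalerKV.
Qed.

Lemma vbounded_pscale_nearP (N : set_system (forall n, E n)) B :
  vbounded (@pscale R E) N B <->
  forall U, N U -> \forall r \near +oo, forall t : R, r < `|t| ->
    forall x, B x -> U (pscale t^-1 x).
Proof. exact: (vbounded_nearP (@pscaleK) (@pscaleKV)). Qed.

(* W at index n and the whole space elsewhere, stated through proofs of
   m = n to avoid a dependent match on the index. *)
Definition onlyat (n : nat) (W : set (E n)) (m : nat) : set (E m) :=
  [set y | forall e : m = n, W (ecast k (E k) e y)].
Arguments onlyat {n} W m.

Lemma onlyat_id n (W : set (E n)) : onlyat W n = W.
Proof.
by apply/seteqP; split=> [y /(_ erefl)//|y Wy e]; rewrite eq_axiomK.
Qed.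

Lemma onlyatP (P : forall m, set (E m) -> Prop) n (W : set (E n)) :
  P n W -> (forall m, P m setT) -> forall m, P m (onlyat W m).
Proof.
move=> PW PT m; have [->|mn] := eqVneq m n; first by rewrite onlyat_id.
suff -> : onlyat W m = setT by [].
by apply/seteqP; split=> // y _ e; move/eqP: mn => /(_ e) [].
Qed.

Definition prod_res (A : forall n, (nat -> nat) -> set (E n)) (a : nat -> nat)
  : set (forall n, E n) := [set x | forall n, A n (slice a n) (x n)].

Lemma prod_vbounded_proj B n : vbounded (@pscale R E) (@prod_nbhs0 R E) B ->
  vbounded *:%R (nbhs 0) [set x n | x in B].
Proof.
rewrite vbounded_pscale_nearP vboundedZ_nearP.
move=> bB W W0.
have U0 : prod_nbhs0 [set x | W (x n)].
  exists n.+1, (onlyat W); split.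
    apply: (onlyatP (P := fun m V => nbhs (0 : E m) V)) => // m.
    exact: filterT.
  by move=> x /(_ n (ltnSn n)); rewrite onlyat_id.
by apply: filterS (bB _ U0) => r rB t rt _ [x Bx <-]; exact: rB.
Qed.

Lemma prod_vbounded (P : forall n, set (E n)) :
  (forall n, vbounded *:%R (nbhs 0) (P n)) ->
  vbounded (@pscale R E) (@prod_nbhs0 R E) [set x | forall n, P n (x n)].
Proof.
move=> bP; apply/vbounded_pscale_nearP => U [k [W [W0 WU]]].
have : \forall r \near +oo, forall i : 'I_k, forall t : R, r < `|t| ->
    forall y, P i y -> W i (t^-1 *: y).
  apply: filter_forall => i.
  exact: (vboundedZ_nearP _ _).1 (bP i) _ (W0 i).
apply: filterS => r rP t rt x Px; apply: WU => n nk.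
exact: rP (Ordinal nk) t rt _ (Px n).
Qed.

Definition null_tail (k : nat) : set (forall n, E n) :=
  [set x | finsupp x /\ forall n, (k <= n)%N -> indist0 (x n)].

Lemma dsum_hull_coord (W : forall n, set (E n)) n u :
  dsum_hull W u -> absconvex (W n) -> W n (u n).
Proof.
move=> [k [l [lk [l1 Wl]]]] aW; have [v [Wv ->]] := Wl n.
apply: absconvex_balanced => //.
have [nk|kn] := ltnP n k; last by rewrite (lk n kn).2 normr0.
by apply: le_trans l1; rewrite (bigD1 (Ordinal nk)) //= lerDl sumr_ge0.
Qed.

Lemma dsum_vbounded_proj B n : vbounded (@pscale R E) (@dsum_nbhs0 R E) B ->
  vbounded *:%R (nbhs 0) [set x n | x in B].
Proof.
rewrite vbounded_pscale_nearP vboundedZ_nearP.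
move=> bB W /nbhs0_absconvex[V [V0 aV] VW].
have U0 : dsum_nbhs0 (dsum_hull (onlyat V)).
  exists (onlyat V); split=> //.
  apply: (onlyatP (P := fun m V => nbhs (0 : E m) V /\ absconvex V)) => // m.
  by split; [exact: filterT|].
apply: filterS (bB _ U0) => r rB t rt _ [x Bx <-]; apply: VW.
have := dsum_hull_coord (n := n) (rB t rt x Bx).
by rewrite onlyat_id => /(_ aV).
Qed.

Lemma dsum_vbounded_tail B : vbounded (@pscale R E) (@dsum_nbhs0 R E) B ->
  exists k, B `<=` [set x | forall n, (k <= n)%N -> indist0 (x n)].
Proof.
move=> bB.
have sepV n : exists V : set (E n), [/\ nbhs 0 V, absconvex V &
    (forall x, B x -> V (x n)) -> forall x, B x -> indist0 (x n)].
  have [B0|] := pselect (forall x, B x -> indist0 (x n)).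
    by exists setT; split=> //; exact: filterT.
  move=> /existsNP[x /not_implyP[Bx /existsNP[W /not_implyP[W0 nWx]]]].
  have [V [V0 aV] VW] := nbhs0_absconvex W0.
  by exists V; split=> // /(_ x Bx)/VW.
have [V HV] := all_sig (fun n => cid (sepV n)).
pose W n := [set y : E n | V n (n.+1%:R *: y)].
have U0 : dsum_nbhs0 (dsum_hull W).
  exists W; split=> // n; have [V0 aV _] := HV n.
  by split; [exact: nbhs0_scale | exact: absconvex_scale].
have [r [r0 rB]] := bB _ U0.
exists (Num.Def.archi_bound r) => x Bx n kn.
have [_ aV BV] := HV n; apply: BV x Bx => y By.
have rn : r < `|n.+1%:R : R|.
  rewrite ger0_norm // (lt_le_trans (archi_boundP (ltW r0))) // ler_nat.
  exact: leqW.
have [u Wu <-] := rB _ rn y By.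
exact: (dsum_hull_coord (n := n) Wu (absconvex_scale (c := n.+1%:R) aV)).
Qed.

Lemma dsum_hull_pow2 (W : forall n, set (E n)) y K :
  (forall n, W n 0) -> (forall n, (K <= n)%N -> y n = 0) ->
  (forall n, (n < K)%N -> W n (2 ^+ n.+1 *: y n)) -> dsum_hull W y.
Proof.
move=> W0 yK Wy.
exists K, (fun n => if (n < K)%N then ((2 : R) ^+ n.+1)^-1 else 0).
split; [|split].
- by move=> n Kn; rewrite ltnNge Kn yK.
- rewrite (eq_bigr (fun n : 'I_K => ((2 : R) ^+ n.+1)^-1)).
    exact: sum_inv_pow2_le1.
  by move=> i _; rewrite ltn_ord ger0_norm // invr_ge0 exprn_ge0.
- move=> n; case: ifPn => nK; last first.
    by exists 0; split; [exact: W0 | rewrite scaler0 yK // leqNgt].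
  exists (2 ^+ n.+1 *: y n); split; first exact: Wy.
  by rewrite scalerA mulVf ?scale1r // expf_neq0.
Qed.

Lemma dsum_vbounded (P : forall n, set (E n)) k :
  (forall n, vbounded *:%R (nbhs 0) (P n)) ->
  vbounded (@pscale R E) (@dsum_nbhs0 R E)
    ([set x | forall n, P n (x n)] `&` null_tail k).
Proof.
move=> bP; apply/vbounded_pscale_nearP => U [W [WH WU]].
have : \forall r \near +oo, forall i : 'I_k, forall t : R, r < `|t| ->
    forall y, P i y -> W i (t^-1 *: y).
  apply: filter_forall => i.
  exact: (vboundedZ_nearP _ _).1 (bP i) _ (WH i).1.
move=> /(filterI (nbhs_pinfty_gt (num_real 0)))/filter_ex[r [r0 rP]].
near=> s => t st x [Px [[K xK] tail]].
have rs : 2 ^+ k * r < s by near: s; exact: (nbhs_pinfty_gt (num_real _)).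
apply/WU/(dsum_hull_pow2 (K := maxn K k)) => [n|n Kn|n nK].
- exact: nbhs_singleton (WH n).1.
- by rewrite /pscale xK ?scaler0 // (leq_trans (leq_maxl _ _) Kn).
rewrite /pscale scalerA -invf_div.
have [nk|kn] := ltnP n k; last exact: indist0Z (tail n kn) (WH n).1.
apply: (rP (Ordinal nk)) (Px n).
rewrite normrM normfV (@ger0_norm _ (2 ^+ n.+1)) ?exprn_ge0 //.
rewrite ltr_pdivlMr ?exprn_gt0 //.
apply: le_lt_trans (lt_trans rs st); rewrite mulrC ler_wpM2r ?(ltW r0) //.
by rewrite ler_weXn2l // ler1n.
Unshelve. all: by end_near.
Qed.

Section resolutions.
Variable A : forall n, (nat -> nat) -> set (E n).
Arguments A : clear implicits.
Hypothesis HA : forall n, tvs_fbr (A n).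

Lemma prod_res_mono a b : le_seq a b -> prod_res A a `<=` prod_res A b.
Proof.
by move=> ab x xa n; exact: fbr_mono (HA n) _ _ (le_slice n ab) _ (xa n).
Qed.

Lemma prod_res_dominate (P : forall n, set (E n)) k :
  (forall n, exists b, P n `<=` A n b) ->
  exists2 a, (k <= a 0)%N & [set x | forall n, P n (x n)] `<=` prod_res A a.
Proof.
case/choice=> beta Pbeta; have [a ka beta_a] := slice_dominate beta k.
exists a => // x Px n.
exact: fbr_mono (HA n) _ _ (beta_a n) _ (Pbeta n _ (Px n)).
Qed.

Lemma prod_res_cover x k : exists2 a, (k <= a 0)%N & prod_res A a x.
Proof.
have [a ka xa] := prod_res_dominate (P := fun n => [set x n]) k
  (fun n => fbr_cover1 (HA n) I).
by exists a => //; exact: xa.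
Qed.

Lemma prod_res_fundamental B k :
  (forall n, vbounded *:%R (nbhs 0) [set x n | x in B]) ->
  exists2 a, (k <= a 0)%N & B `<=` prod_res A a.
Proof.
move=> bB; have [a ka Ba] := prod_res_dominate
  (P := fun n => [set x n | x in B]) k
  (fun n => fbr_fundamental (HA n) (@subsetT _ _) (bB n)).
by exists a => // x Bx; apply: Ba => n; exists x.
Qed.

Lemma prod_res_spec :
  fbr_spec (@pscale R E) (@prod_nbhs0 R E) setT (prod_res A).
Proof.
split=> //.
- exact: prod_res_mono.
- by move=> x _; have [a _ xa] := prod_res_cover x 0; exists a.
- move=> a; apply: (@prod_vbounded (fun n => A n (slice a n))) => n.
  exact: (fbr_bounded (HA n) (slice a n)).
- move=> B _ bB.
  have [a _ Ba] := prod_res_fundamental 0 (fun n => @prod_vbounded_proj B n bB).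
  by exists a.
Qed.

Lemma dsum_res_spec :
  fbr_spec (@pscale R E) (@dsum_nbhs0 R E) (@finsupp R E)
    (fun a => prod_res A a `&` null_tail (a 0)).
Proof.
split.
- move=> a b ab x [xa [xfin xtail]]; split; first exact: prod_res_mono ab _ xa.
  by split=> // n bn; apply: xtail; exact: leq_trans (ab 0%N) bn.
- by move=> a x [_ []].
- move=> x [k xk]; have [a ka xa] := prod_res_cover x k.
  exists a => //; split=> //; split; first by exists k.
  by move=> n an; rewrite xk; [exact: indist0_0 | exact: leq_trans ka an].
- move=> a; apply: (@dsum_vbounded (fun n => A n (slice a n)) (a 0)) => n.
  exact: (fbr_bounded (HA n) (slice a n)).
- move=> B Bfin bB; have [k Bk] := dsum_vbounded_tail bB.
  have [a ka Ba] :=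
    prod_res_fundamental k (fun n => @dsum_vbounded_proj B n bB).
  exists a => x Bx; split; [exact: Ba | split; first exact: Bfin].
  by move=> n an; exact: Bk _ Bx n (leq_trans ka an).
Qed.

End resolutions.

End families.

Unset Implicit Arguments.

Theorem proposition2p4 (R : realType) :
  (* (i) linear subspaces *)
  (forall (E : tvsType R) (F : set E),
      linear_subspace F -> has_fbr E ->
      fbr_on (fun (t : R) (x : E) => t *: x) (subspace_nbhs0 F) F) /\
  (* (ii) countable locally convex direct sums *)
  (forall E : nat -> tvsType R,
      (forall n, has_fbr (E n)) ->
      fbr_on (@pscale R E) (@dsum_nbhs0 R E) (@finsupp R E)) /\
  (* (iii) countable products *)
  (forall E : nat -> tvsType R,
      (forall n, has_fbr (E n)) ->
      fbr_on (@pscale R E) (@prod_nbhs0 R E) setT).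
Proof.
split; first by move=> E F; exact: subspace_fbr.
split=> E /has_fbr_seq[A HA]; apply/fbr_onP.
  by exists (fun a => prod_res A a `&` null_tail (a 0)); exact: dsum_res_spec.
by exists (prod_res A); exact: prod_res_spec.
Qed.
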